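(* Let $N$ and $n$ be positive integers with $N \le n$, and let $\pi \in S_n$ be a permutation of $\{1,2,\dots,n\}$ such that every cycle of $\pi$ (in its disjoint cycle decomposition, fixed points counted as $1$-cycles) contains at most one element $i$ with $i > N$. Write the cycle type of $\pi$ as a partition $\lambda = (\lambda_1,\dots,\lambda_m,1,\dots,1) \vdash n$, where $\lambda_1 \ge \lambda_2 \ge \dots \ge \lambda_m > 1$ are the lengths of the cycles of $\pi$ of length greater than $1$, and the remaining parts equal to $1$ correspond to the fixed points of $\pi$. Then \[ \sum_{i=1}^{m} \lambda_i \le m + N. \]
   Context: In the paper's setting, $N$ is the number of keywords in a keyword query $q=\{k_1,\dots,k_N\}$ and $n=|V_D|$ is the size of the vocabulary of a relational database $D$ (the set of its relation names, attributes and attribute domains). A configuration of $q$ on $D$ (an injective map from keywords to database terms) is identified with a permutation $\pi\in S_{|V_D|}$ in which each cycle contains at most one element of value bigger than $N$; the claim concerns such permutations. The cycle type of a permutation is the partition of $n$ formed by the lengths of its cycles listed in weakly decreasing order. *)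

From mathcomp Require Import all_boot all_order all_fingroup.
Set Implicit Arguments. Unset Strict Implicit. Unset Printing Implicit Defensive.

(* Elements of 'I_n are 0..n-1; the paper's element i (1-based) is the ordinal
   i-1, so "i > N" (1-based) becomes "N <= x" for x : 'I_n. *)
Definition nontrivial_cycles (n : nat) (s : 'S_n) : {set {set 'I_n}} :=
  [set C in porbits s | 1 < #|C|].

(* Each nontrivial cycle C has at most one point x >= N, so #|C| - 1 is at
   most the number of points of C below N.  The cycles are disjoint, so summing
   over them bounds the sum of the #|C| - 1 by the number of points below N. *)
From mathcomp Require Import all_boot all_order all_fingroup.

Set Implicit Arguments.
Unset Strict Implicit.
Unset Printing Implicit Defensive.

Lemma partition_porbits (T : finType) (s : {perm T}) :
  partition (porbits s) [set: T].
Proof.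
have -> : porbits s = orbit 'P <[s]> @: [set: T].
  apply/setP => C; apply/imsetP/imsetP => -[x _ ->];
  by exists x; rewrite ?inE ?porbitE.
by apply: orbit_partition; apply/actsP => a _ x; rewrite !inE.
Qed.

Lemma card_ord_lt n N : N <= n -> #|[set x : 'I_n | x < N]| = N.
Proof.
move=> le_Nn; have widen_inj : injective (widen_ord le_Nn).
  by move=> x y /(congr1 val) eq_xy; apply: val_inj.
rewrite -[RHS]card_ord -(card_imset _ widen_inj).
apply: eq_card => x; rewrite inE; apply/idP/imsetP => [ltxN | [y _ ->]].
  by exists (Ordinal ltxN); last exact: val_inj.
exact: (ltn_ord y).
Qed.

Lemma sum_card_trivIset_le (T : finType) (P : {set {set T}}) (A : {set T}) :
  trivIset P -> {in P, forall C, #|C :\: A| <= 1} ->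
  \sum_(C in P) #|C| <= #|P| + #|A|.
Proof.
move=> trivP outA_le1.
have -> : \sum_(C in P) #|C| =
          \sum_(C in P) #|C :\: A| + \sum_(C in P) #|C :&: A|.
  by rewrite -big_split; apply: eq_bigr => C _; rewrite /= addnC cardsID.
apply: leq_add; first by rewrite -sum1_card; exact: leq_sum.
have cardIE C : #|C :&: A| = \sum_(x in C) (x \in A).
  by rewrite -sum1dep_card -big_mkcondr.
rewrite (eq_bigr _ (fun C _ => cardIE C)) -big_trivIset //.
rewrite -big_mkcondr sum1dep_card.
by apply/subset_leq_card/subsetP => x; rewrite inE => /andP[].
Qed.

Theorem mainTheorem1 (N n : nat) (s : 'S_n) :
  0 < N -> 0 < n -> N <= n ->
  (forall C, C \in porbits s -> #|[set x in C | N <= nat_of_ord x]| <= 1) ->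
  \sum_(C in nontrivial_cycles s) #|C| <= #|nontrivial_cycles s| + N.
Proof.
move=> _ _ le_Nn high_le1.
have sub_porbits : nontrivial_cycles s \subset porbits s.
  by apply/subsetP => C; rewrite inE => /andP[].
rewrite -(card_ord_lt le_Nn); apply: sum_card_trivIset_le.
  exact: trivIsetS sub_porbits (partition_trivIset (partition_porbits s)).
move=> C /(subsetP sub_porbits) /high_le1.
suff -> : C :\: [set x : 'I_n | x < N] = [set x in C | N <= x] by [].
by apply/setP => x; rewrite !inE -leqNgt andbC.
Qed.
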